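(* Let $S$ be a finite set, let $\sigma\in\mathrm{Perm}(S)$, and let $\tau,\tau'\in\mathrm{Perm}(S)$ have disjoint supports. Then: (1) $(\sigma\setminus\tau)^{-1}=\sigma^{-1}\setminus\tau^{-1}$; (2) $(\sigma\setminus\tau)\setminus\tau'=\sigma\setminus(\tau\tau')=(\sigma\setminus\tau')\setminus\tau$; (3) two elements $(i,k),(i',k')\in\{0,1\}\times(S\setminus\mathrm{supp}(\tau))$ lie in the same cycle of $\tau'\tau\bowtie\sigma$ if and only if they lie in the same cycle of $\tau'\bowtie(\sigma\setminus\tau)$ (where $\tau'$ is regarded as a permutation of $S\setminus\mathrm{supp}(\tau)$, which it preserves).
   Context: $\mathrm{Perm}(S)$ denotes permutations of $S$ and $\mathrm{supp}(\sigma)=\{k:\sigma(k)\neq k\}$. For $\sigma,\tau\in\mathrm{Perm}(S)$, $\sigma\setminus\tau\in\mathrm{Perm}(S\setminus\mathrm{supp}(\tau))$ is defined by $(\sigma\setminus\tau)(k)=(\tau\sigma)^{r(k)}(k)$, where $r(k)\ge1$ is the smallest integer with $(\tau\sigma)^{r(k)}(k)\notin\mathrm{supp}(\tau)$. For $\pi,\sigma\in\mathrm{Perm}(S)$, $\pi\bowtie\sigma\in\mathrm{Perm}(\{0,1\}\times S)$ is given by $(0,k)\mapsto(1,\sigma(k))$ and $(1,k)\mapsto(0,\pi(k))$. *)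

From mathcomp Require Import all_boot all_fingroup.
Set Implicit Arguments. Unset Strict Implicit. Unset Printing Implicit Defensive.

Local Open Scope group_scope.

Section Defs.
Variable T : finType.

Definition supp (s : {perm T}) : {set T} := [set k | s k != k].

(* r(k) - 1 : index of the first j (>= 0) with (tau sigma)^(j+1) k outside supp tau.
   Note: mathcomp's (sigma * tau) x = tau (sigma x), i.e. it is the paper's tau sigma. *)
Definition rm_idx (s t : {perm T}) (k : T) : nat :=
  find (fun j => ((s * t) ^+ j.+1) k \notin supp t) (iota 0 #|T|).

Definition rm_fun (s t : {perm T}) (k : T) : T :=
  if k \in supp t then k else ((s * t) ^+ (rm_idx s t k).+1) k.

Lemma rm_idx_lt s t k : k \notin supp t -> rm_idx s t k < #|T|.
Proof.
move=> kA; set p := s * t.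
have ho : fingraph.order p k <= #|T| by rewrite /fingraph.order; apply: max_card.
have o0 : 0 < fingraph.order p k by apply: fingraph.order_gt0.
rewrite /rm_idx -[X in _ < X](size_iota 0 #|T|) -has_find; apply/hasP.
exists (fingraph.order p k).-1; first by rewrite mem_iota /= add0n prednK.
by rewrite prednK // permX iter_order //; apply: perm_inj.
Qed.

Lemma rm_fun_out s t k : k \notin supp t -> rm_fun s t k \notin supp t.
Proof.
move=> kA; rewrite /rm_fun (negbTE kA).
have := rm_idx_lt s kA; rewrite /rm_idx -[X in _ < X](size_iota 0 #|T|) -has_find.
move=> /(nth_find 0); rewrite nth_iota //.
by move: (rm_idx_lt s kA).
Qed.

Lemma rm_fun_inj s t : injective (rm_fun s t).
Proof.
have key : forall k k', k \notin supp t -> k' \notin supp t ->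
    rm_idx s t k <= rm_idx s t k' -> rm_fun s t k = rm_fun s t k' -> k = k'.
  move=> k k' kA k'A le E; move: E; rewrite /rm_fun (negbTE kA) (negbTE k'A).
  set p := s * t; set a := rm_idx s t k; set b := rm_idx s t k'.
  have -> : b.+1 = (b - a) + a.+1 by rewrite addnS subnK.
  rewrite expgD permM => /perm_inj E.
  case: (posnP (b - a)) => [d0|dpos]; first by rewrite d0 expg0 perm1 in E.
  have ltb : (b - a).-1 < b by apply: leq_trans (leq_subr a b); rewrite prednK.
  have := @before_find _ 0 (fun j => (p ^+ j.+1) k' \notin supp t) (iota 0 #|T|) _ ltb.
  rewrite nth_iota; last by apply: ltn_trans ltb (rm_idx_lt s k'A).
  by rewrite add0n prednK // -E kA.
move=> k k'.
case kA: (k \in supp t); case k'A: (k' \in supp t).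
- by rewrite /rm_fun kA k'A.
- move=> E; have := rm_fun_out s (negbT k'A); rewrite -E /rm_fun kA.
  by rewrite kA.
- move=> E; have := rm_fun_out s (negbT kA); rewrite E /rm_fun k'A.
  by rewrite k'A.
- case: (leqP (rm_idx s t k) (rm_idx s t k')) => le E.
  + exact: key (negbT kA) (negbT k'A) le E.
  + by symmetry; apply: key (negbT k'A) (negbT kA) (ltnW le) (esym E).
Qed.

(* sigma \ tau, a permutation of S \ supp tau, encoded as a permutation of S
   that is the identity on supp tau. *)
Definition perm_remove (s t : {perm T}) : {perm T} := perm (@rm_fun_inj s t).

(* pi ⋈ sigma on {0,1} x S, with 0 = false, 1 = true:
   (0,k) |-> (1, sigma k), (1,k) |-> (0, pi k). *)
Definition bowtie_fun (pi s : {perm T}) (x : bool * T) : bool * T :=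
  if x.1 then (false, pi x.2) else (true, s x.2).

Lemma bowtie_inj pi s : injective (bowtie_fun pi s).
Proof.
move=> [[] k] [[] k'] //= [] /perm_inj -> //.
Qed.

Definition bowtie (pi s : {perm T}) : {perm (bool * T)} := perm (@bowtie_inj pi s).

End Defs.

Notation "s \rm t" := (perm_remove s t) (at level 40, left associativity).
Notation "pi \bowtie s" := (bowtie pi s) (at level 40).

From mathcomp Require Import all_boot all_fingroup.
Set Implicit Arguments. Unset Strict Implicit. Unset Printing Implicit Defensive.

(* For k outside supp t, (s \rm t) k is the first point after k on the orbit of
   the paper's tau sigma (here s * t) that lies outside supp t: s \rm t is the
   first-return map of s * t to the complement A of supp t.  All three parts are
   facts about first-return maps.  Reversing an excursion of p gives one of p^-1,
   whence (1).  Returning to A and then, under the induced map, to B inside A is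
   returning directly to B; as t' fixes supp t, t' after s \rm t is the
   first-return map of s * t * t' to A, whence (2).  Finally a permutation and its
   first-return map to A have the same orbits on A, and t' \bowtie (s \rm t) is
   the first-return map of (t * t') \bowtie s to {0,1} x A, whence (3). *)

Local Open Scope group_scope.

Section Excursion.
Variables (T : Type) (p : T -> T) (A : {pred T}).

Inductive excursion : T -> T -> Prop :=
| excursion1 x : excursion x (p x)
| excursionS x y : p x \notin A -> excursion (p x) y -> excursion x y.

Definition first_return (f : T -> T) :=
  forall x, x \in A -> excursion x (f x) /\ f x \in A.

Lemma excursion_uniq x y z :
  excursion x y -> excursion x z -> y \in A -> z \in A -> y = z.
Proof.
move=> xy; elim: xy z => [{}x | {}x {}y pxA _ IH] z xz yA zA.
  by case: xz yA zA => // {}x {}z /negbTE->.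
case: xz pxA IH zA => [{}x | {}x {}z _ xz] pxA IH zA; last exact: IH.
by rewrite zA in pxA.
Qed.

Lemma excursion_iter x n : (forall j, j < n -> iter j.+1 p x \notin A) ->
  excursion x (iter n.+1 p x).
Proof.
elim: n x => [|n IH] x outA; first exact: excursion1.
apply: excursionS; first exact: (outA 0).
by rewrite iterSr; apply: IH => j ltjn; rewrite -iterSr; apply: outA.
Qed.

Lemma excursion_rcons x y : excursion x y -> y \notin A -> excursion x (p y).
Proof.
elim=> [{}x | {}x {}y pxA _ IH] yA; apply: excursionS => //; last exact: IH.
exact: excursion1.
Qed.

Lemma excursion_cat x y z : excursion x y -> y \notin A -> excursion y z ->
  excursion x z.
Proof.
elim=> [{}x | {}x {}y pxA _ IH] yA yz; apply: excursionS => //.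
exact: IH.
Qed.

Lemma excursion_closed (C : {pred T}) x y : {homo p : z / z \in C} ->
  excursion x y -> x \in C -> y \in C.
Proof. by move=> pC; elim=> [{}x | {}x {}y _ _ IH] xC; [apply: pC | apply/IH/pC]. Qed.

Lemma excursion_iterE x y : excursion x y -> exists n, y = iter n.+1 p x.
Proof.
elim=> [{}x | {}x {}y _ _ [n ->]]; first by exists 0.
by exists n.+1; rewrite [in RHS]iterSr.
Qed.

Lemma excursion_first x y n : excursion x y -> iter n.+1 p x \in A ->
  exists2 m, m <= n & iter n.+1 p x = iter m p y.
Proof.
move=> xy; elim: xy n => [{}x | {}x {}y pxA _ IH] n.
  by exists n; rewrite ?iterSr.
case: n => [|n]; first by rewrite /= (negbTE pxA).
by rewrite iterSr => /IH[m le_mn ->]; exists m; rewrite ?leqW.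
Qed.

End Excursion.

Lemma excursion_sub T p (A B : {pred T}) x y :
  {subset B <= A} -> excursion p A x y -> excursion p B x y.
Proof.
move=> BA; elim=> [{}x | {}x {}y pxA _ IH]; first exact: excursion1.
by apply: excursionS IH; apply: contra pxA; apply: BA.
Qed.

Lemma first_return_trans T p (A B : {pred T}) f g : {subset B <= A} ->
  first_return p A f -> first_return f B g -> first_return p B g.
Proof.
move=> BA pf fg b bB; have [bg gB] := fg b bB; split=> //.
suff lift x y : x \in A -> excursion f B x y -> excursion p B x y.
  by apply: lift bg; apply: BA.
move=> xA xy; elim: xy xA => [{}x | {}x {}y fxB _ IH] xA; have [xf fA] := pf x xA.
  exact: excursion_sub xf.
exact: excursion_cat (excursion_sub BA xf) fxB (IH fA).
Qed.

Lemma first_return_orbit T p (A : {pred T}) f x y :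
  first_return p A f -> x \in A -> y \in A ->
  (exists n, y = iter n p x) <-> (exists n, y = iter n f x).
Proof.
move=> pf xA yA; split=> -[n yE]; subst y.
  elim/ltn_ind: n x xA yA => -[|n] IH x xA nA; first by exists 0.
  have [xf fA] := pf x xA.
  have [m le_mn E] := excursion_first xf nA; rewrite E in nA *.
  have [k ->] := IH m (leq_ltn_trans le_mn (ltnSn n)) (f x) fA nA.
  by exists k.+1; rewrite iterSr.
elim: n {yA} => [|m [n IH]]; first by exists 0.
have mA : iter m f x \in A by elim: m {IH} => //= m /pf[].
have [k Ek] := excursion_iterE (pf _ mA).1.
by exists (k.+1 + n); rewrite iterS Ek iterD IH.
Qed.

Lemma excursion_comp T (p q h : T -> T) (A : {pred T}) x y :
  (forall z, q z = h (p z)) -> (forall z, z \notin A -> h z = z) ->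
  excursion p A x y -> excursion q A x (h y).
Proof.
move=> qE hA; elim=> [{}x | {}x {}y pxA _ IH]; first by rewrite -qE; apply: excursion1.
have qx : q x = p x by rewrite qE hA.
by apply: excursionS; rewrite qx.
Qed.

Lemma excursion_map T (f p q : T -> T) (A : {pred T}) x y :
  (forall z, f (p z) = q (f z)) -> {mono f : z / z \in A} ->
  excursion p A x y -> excursion q A (f x) (f y).
Proof.
move=> fpq fA; elim=> [{}x | {}x {}y pxA _ IH]; first by rewrite fpq; apply: excursion1.
by apply: excursionS; rewrite -fpq ?fA.
Qed.

Lemma excursion_permV (T : finType) (p : {perm T}) (A : {pred T}) x y :
  excursion p A x y -> excursion p^-1 A y x.
Proof.
elim=> [{}x | {}x {}y pxA _ IH]; first by rewrite -{2}(permK p x); apply: excursion1.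
by have := excursion_rcons IH pxA; rewrite permK.
Qed.

Lemma porbit_first_return (T : finType) (p q : {perm T}) (A : {pred T}) x y :
  first_return p A q -> x \in A -> y \in A ->
  (y \in porbit p x) = (y \in porbit q x).
Proof.
move=> pq xA yA; have [to_q to_p] := first_return_orbit pq xA yA.
apply/porbitP/porbitP => -[n yE].
  by have [|m ->] := to_q; [exists n; rewrite -permX | exists m; rewrite permX].
by have [|m ->] := to_p; [exists n; rewrite -permX | exists m; rewrite permX].
Qed.

Section PermRemove.
Variable T : finType.
Implicit Types s t u : {perm T}.

Lemma perm_onE S t : perm_on S t = (supp t \subset S).
Proof. by apply: eq_subset => x; rewrite !inE. Qed.

Lemma supp_permV t : supp t^-1 = supp t.
Proof. by apply/setP => x; rewrite !inE (can2_eq (permKV t) (permK t)) eq_sym. Qed.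

Lemma perm_on_supp t : perm_on (supp t) t.
Proof. by rewrite perm_onE. Qed.

Lemma perm_on_disjoint t t' : [disjoint supp t & supp t'] -> perm_on (~: supp t) t'.
Proof. by rewrite perm_onE -disjoints_subset disjoint_sym. Qed.

Lemma commute_disjoint_supp t t' : [disjoint supp t & supp t'] -> commute t t'.
Proof. exact: perm_onC (perm_on_supp t) (perm_on_supp t'). Qed.

Lemma supp_mul_disjoint t t' : [disjoint supp t & supp t'] ->
  supp (t * t') = supp t :|: supp t'.
Proof.
move=> tt'; apply/setP => x; rewrite in_setU [x \in supp t]inE !inE permM.
have [xt | /negbNE/eqP tx] := boolP (t x != x); last by rewrite tx.
have txt : t x \notin ~: supp t.
  by rewrite in_setC negbK (perm_closed _ (perm_on_supp t)) inE.
by rewrite (out_perm (perm_on_disjoint tt') txt).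
Qed.

Lemma perm_remove_supp s t k : k \in supp t -> (s \rm t) k = k.
Proof. by move=> kt; rewrite permE /rm_fun kt. Qed.

Lemma perm_remove_on s t : perm_on (~: supp t) (s \rm t).
Proof.
rewrite perm_onE; apply/subsetP => k; rewrite inE in_setC.
by apply: contraNN => kt; rewrite perm_remove_supp.
Qed.

Lemma perm_remove_first_return s t : first_return (s * t) (~: supp t) (s \rm t).
Proof.
move=> k; rewrite !in_setC => kt; split; last by rewrite permE rm_fun_out.
rewrite permE /rm_fun (negbTE kt) permX; apply: excursion_iter => j ltj.
have := before_find 0 ltj; rewrite nth_iota ?add0n; last exact: ltn_trans ltj (rm_idx_lt s kt).
by rewrite permX in_setC => ->.
Qed.

Lemma perm_remove_uniq s t k y : k \notin supp t -> y \notin supp t ->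
  excursion (s * t) (~: supp t) k y -> (s \rm t) k = y.
Proof.
move=> kt yt ky.
have /(perm_remove_first_return s)[kr rA] : k \in ~: supp t by rewrite in_setC.
by apply: excursion_uniq kr ky rA _; rewrite in_setC.
Qed.

Lemma perm_remove_fixed s t k : (s * t) k = k -> (s \rm t) k = k.
Proof.
move=> fixk; have [kt | kt] := boolP (k \in supp t); first exact: perm_remove_supp.
by apply: perm_remove_uniq => //; rewrite -{2}fixk; apply: excursion1.
Qed.

Lemma eq_perm_remove s t u : perm_on (~: supp t) u ->
  first_return (s * t) (~: supp t) u -> s \rm t = u.
Proof.
move=> u_on ret; apply/permP => k; have [kt | kt] := boolP (k \in supp t).
  by rewrite perm_remove_supp // (out_perm u_on) // in_setC negbK.
have /ret[ku uA] : k \in ~: supp t by rewrite in_setC.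
by apply: perm_remove_uniq => //; rewrite -in_setC.
Qed.

Lemma perm_removeV s t : (s \rm t)^-1 = s^-1 \rm t^-1.
Proof.
have tV_on := perm_onV (perm_on_supp t).
have rV_on := perm_onV (perm_remove_on s t).
symmetry; apply: eq_perm_remove; rewrite supp_permV // => a aA.
have bA : (s \rm t)^-1 a \in ~: supp t by rewrite (perm_closed _ rV_on).
split=> //; have [ba _] := perm_remove_first_return s bA; rewrite permKV in ba.
have fpq z : t^-1 ((s * t)^-1 z) = (s^-1 * t^-1) (t^-1 z) by rewrite invMg !permM.
have t_mono : {mono t^-1 : z / z \in ~: supp t}.
  by move=> z; rewrite !in_setC (perm_closed _ tV_on).
have := excursion_map fpq t_mono (excursion_permV ba).
by rewrite !(out_perm tV_on) // -in_setC.
Qed.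

Lemma mul_perm_remove_first_return s t t' : [disjoint supp t & supp t'] ->
  first_return (s * t * t') (~: supp t) ((s \rm t) * t').
Proof.
move=> tt' a aA; have t'_on := perm_on_disjoint tt'.
have [ar rA] := perm_remove_first_return s aA.
split; last by rewrite permM (perm_closed _ t'_on).
rewrite permM; apply: excursion_comp ar => [z | z]; first by rewrite !permM.
exact: out_perm t'_on.
Qed.

Lemma perm_remove2_on s t t' : [disjoint supp t & supp t'] ->
  perm_on (~: supp t :&: ~: supp t') ((s \rm t) \rm t').
Proof.
move=> tt'; rewrite perm_onE; apply/subsetP => k; rewrite inE in_setI !in_setC => moved.
apply/andP; split; move: moved; apply: contra => kt; apply/eqP.
  rewrite perm_remove_fixed // permM perm_remove_supp //.
  by rewrite (out_perm (perm_on_disjoint tt')) // in_setC negbK.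
exact: perm_remove_supp.
Qed.

Lemma perm_remove2_first_return s t t' : [disjoint supp t & supp t'] ->
  first_return (s * t * t') (~: supp t :&: ~: supp t') ((s \rm t) \rm t').
Proof.
move=> tt'; apply: (first_return_trans _ (mul_perm_remove_first_return s tt')).
  by move=> k /setIP[].
move=> a /setIP[aA aB]; have [ar rB] := perm_remove_first_return (s \rm t) aB.
split; first by apply: excursion_sub ar => k /setIP[].
rewrite in_setI rB andbT; apply: excursion_closed ar aA => z zA.
by rewrite permM (perm_closed _ (perm_on_disjoint tt')) (perm_closed _ (perm_remove_on s t)).
Qed.

Lemma perm_removeM s t t' : [disjoint supp t & supp t'] ->
  (s \rm t) \rm t' = s \rm (t' * t).
Proof.
move=> tt'; rewrite -(commute_disjoint_supp tt'); symmetry.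
apply: eq_perm_remove; rewrite ?mulgA supp_mul_disjoint // setCU.
  exact: perm_remove2_on.
exact: perm_remove2_first_return.
Qed.

Lemma bowtie_false pi s x : (pi \bowtie s) (false, x) = (true, s x).
Proof. by rewrite permE. Qed.

Lemma bowtie_true pi s x : (pi \bowtie s) (true, x) = (false, pi x).
Proof. by rewrite permE. Qed.

Lemma bowtie_excursion s t t' z y : [disjoint supp t & supp t'] ->
  excursion (s * t) (~: supp t) z y -> y \notin supp t ->
  excursion ((t * t') \bowtie s) [pred x | x.2 \notin supp t] (false, z) (true, y).
Proof.
move=> tt'; elim=> [{}z | {}z {}y tsz _ IH] yt.
  have szt : s z \notin supp t by rewrite -(perm_closed _ (perm_on_supp t)) -permM.
  rewrite permM (out_perm (perm_on_supp t) szt) -(bowtie_false (t * t')).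
  exact: excursion1.
rewrite in_setC negbK permM in tsz.
have szt : s z \in supp t by rewrite -(perm_closed _ (perm_on_supp t)).
apply: excursionS; rewrite bowtie_false; first by rewrite /= negbK.
have tsz_fixed : t' (t (s z)) = t (s z).
  by rewrite (out_perm (perm_on_disjoint tt')) // in_setC negbK.
apply: excursionS; rewrite bowtie_true permM tsz_fixed; first by rewrite /= negbK.
by rewrite -permM; apply: IH.
Qed.

Lemma bowtie_first_return s t t' : [disjoint supp t & supp t'] ->
  first_return ((t * t') \bowtie s) [pred x | x.2 \notin supp t] (t' \bowtie (s \rm t)).
Proof.
move=> tt' [[] z]; rewrite inE /= => zt.
  rewrite bowtie_true; split.
    rewrite -{2}(out_perm (perm_on_supp t) zt) -permM -(bowtie_true _ s).
    exact: excursion1.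
  by rewrite inE /= -in_setC (perm_closed _ (perm_on_disjoint tt')) in_setC.
have /(perm_remove_first_return s)[zr rA] : z \in ~: supp t by rewrite in_setC.
rewrite (bowtie_false t'); split; first by apply: bowtie_excursion; rewrite -?in_setC.
by rewrite inE /= -in_setC.
Qed.

End PermRemove.

Theorem lemma3p16 (T : finType) (s t t' : {perm T})
    (hdisj : [disjoint supp t & supp t']) :
  (s \rm t)^-1 = s^-1 \rm t^-1
  /\ ((s \rm t) \rm t' = s \rm (t' * t) /\ s \rm (t' * t) = (s \rm t') \rm t)
  /\ (forall (i i' : bool) (k k' : T), k \notin supp t -> k' \notin supp t ->
        ((i', k') \in porbit ((t * t') \bowtie s) (i, k))
        = ((i', k') \in porbit (t' \bowtie (s \rm t)) (i, k))).
Proof.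
split; first exact: perm_removeV.
split; first split.
- exact: perm_removeM.
- by rewrite perm_removeM 1?disjoint_sym // (commute_disjoint_supp hdisj).
- move=> i i' k k' kt k't.
  by apply: porbit_first_return (bowtie_first_return s hdisj) _ _; rewrite inE.
Qed.
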